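(* Let $I\in\mathcal I_\lambda$, $a\in\{1,\dots,n-1\}$, with $a\in I_k$, $a+1\in I_l$, and let $s_{a,a+1}(z)=(z_1,\dots,z_{a-1},z_{a+1},z_a,z_{a+2},\dots,z_n)$. Then: if $k=l$: $W_I(t,s_{a,a+1}(z))=W_I(t,z)$; if $k<l$: $W_{s_{a,a+1}(I)}(t,z)=\frac{1-hz_a/z_{a+1}}{1-z_a/z_{a+1}}W_I(t,s_{a,a+1}(z))+(h-1)\frac{z_a/z_{a+1}}{1-z_a/z_{a+1}}W_I(t,z)$; if $k>l$: $W_{s_{a,a+1}(I)}(t,z)=\frac{1-h^{-1}z_{a+1}/z_a}{1-z_{a+1}/z_a}W_I(t,s_{a,a+1}(z))+(h^{-1}-1)\frac{z_{a+1}/z_a}{1-z_{a+1}/z_a}W_I(t,z)$. (Here the dependence on $h$ is suppressed.)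
   Context: Fix $N,n$, $\lambda\in\mathbb Z_{\ge0}^N$, $\sum\lambda_k=n$; $\lambda^{(k)}=\lambda_1+\dots+\lambda_k$, $\lambda^{\{1\}}=\sum_{k=1}^{N-1}\lambda^{(k)}$. $\mathcal I_\lambda$ = ordered partitions $I=(I_1,\dots,I_N)$ of $\{1,\dots,n\}$ with $|I_k|=\lambda_k$; $I_1\cup\dots\cup I_k=\{i^{(k)}_1<\dots<i^{(k)}_{\lambda^{(k)}}\}$; $s_{a,a+1}(I)$ is obtained from $I$ by swapping the elements $a$ and $a+1$. Weight functions: variables $t^{(k)}_a$ ($1\le k\le N-1$), $z_1,\dots,z_n$, $h$, $t^{(N)}_a=z_a$; $U_I=\prod_{k=1}^{N-1}\prod_{a=1}^{\lambda^{(k)}}\Big(\prod_{c:\,i^{(k+1)}_c<i^{(k)}_a}(1-ht^{(k+1)}_c/t^{(k)}_a)\prod_{c:\,i^{(k+1)}_c>i^{(k)}_a}(1-t^{(k+1)}_c/t^{(k)}_a)\prod_{b=a+1}^{\lambda^{(k)}}\frac{1-ht^{(k)}_b/t^{(k)}_a}{1-t^{(k)}_b/t^{(k)}_a}\Big)$ ($c\in\{1..\lambda^{(k+1)}\}$); $W_I=(1-h)^{\lambda^{\{1\}}}\mathrm{Sym}_{t^{(1)}}\cdots\mathrm{Sym}_{t^{(N-1)}}U_I$ (sum over permutations within each group $t^{(k)}$). *)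

(* All indices are 1-based as in the paper. *)
From HB Require Import structures.
From mathcomp Require Import all_boot all_order all_algebra all_fingroup.
Set Implicit Arguments. Unset Strict Implicit. Unset Printing Implicit Defensive.
Import GRing.Theory.

Definition lamP (lam : nat -> nat) (k : nat) : nat := \sum_(1 <= j < k.+1) lam j.
Definition lamB (N : nat) (lam : nat -> nat) : nat := \sum_(1 <= k < N) lamP lam k.

(* An ordered partition I = (I_1,...,I_N) of {1..n} with |I_k| = lambda_k,
   encoded by the block-assignment map f : element i |-> the k with i in I_k. *)
Definition is_part (N n : nat) (lam : nat -> nat) (f : nat -> nat) : Prop :=
  (forall i, 1 <= i <= n -> 1 <= f i <= N) /\
  (forall k, 1 <= k <= N -> count (fun i => f i == k) (iota 1 n) = lam k).

Definition ielt (n : nat) (f : nat -> nat) (k c : nat) : nat :=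
  nth 0 [seq i <- iota 1 n | f i <= k] c.-1.

Definition swapn (a i : nat) : nat :=
  if i == a then a.+1 else if i == a.+1 then a else i.

Definition sI (a : nat) (f : nat -> nat) : nat -> nat := fun i => f (swapn a i).
Definition sz (K : Type) (a : nat) (z : nat -> K) : nat -> K := fun i => z (swapn a i).

Local Open Scope ring_scope.

(* the variables t^{(k)}_c, with t^{(N)}_c = z_c *)
Definition tvar (K : fieldType) (N : nat) (t : nat -> nat -> K) (z : nat -> K)
  (k c : nat) : K := if k == N then z c else t k c.

Definition Ufun (K : fieldType) (N n : nat) (lam : nat -> nat) (f : nat -> nat)
  (h : K) (t : nat -> nat -> K) (z : nat -> K) : K :=
  \prod_(1 <= k < N) \prod_(1 <= a < (lamP lam k).+1)
    ((\prod_(1 <= c < (lamP lam k.+1).+1)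
        (if (ielt n f k.+1 c < ielt n f k a)%N
         then 1 - h * tvar N t z k.+1 c / tvar N t z k a
         else if (ielt n f k a < ielt n f k.+1 c)%N
         then 1 - tvar N t z k.+1 c / tvar N t z k a
         else 1))
     * \prod_(a.+1 <= b < (lamP lam k).+1)
         ((1 - h * tvar N t z k b / tvar N t z k a)
          / (1 - tvar N t z k b / tvar N t z k a))).

Definition permvar (K : Type) (m L : nat) (s : 'S_L) (t : nat -> nat -> K)
  : nat -> nat -> K :=
  fun j c =>
    if (j == m) && (0 < c)%N then
      (if insub c.-1 is Some i then t j (val (s i)).+1 else t j c)
    else t j c.

(* Sym_{t^{(1)}} ... Sym_{t^{(m)}} (sum over permutations, no normalization) *)
Fixpoint SymUpto (K : fieldType) (lam : nat -> nat) (m : nat)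
  (F : (nat -> nat -> K) -> K) {struct m} : (nat -> nat -> K) -> K :=
  match m with
  | 0 => F
  | m'.+1 => SymUpto lam m'
               (fun t => \sum_(s : 'S_(lamP lam m'.+1)) F (permvar m'.+1 s t))
  end.

Definition W (K : fieldType) (N n : nat) (lam : nat -> nat) (f : nat -> nat)
  (h : K) (t : nat -> nat -> K) (z : nat -> K) : K :=
  (1 - h) ^+ lamB N lam * SymUpto lam N.-1 (fun t' => Ufun N n lam f h t' z) t.

(* Expanding the outermost symmetrization, W_I is (1-h)^{lambda^{(N-1)}}
   times a sum over permutations s of the variables t^{(N-1)} of the factors of U_I that
   involve z, times the weight function of the partition induced on I_1 u ... u I_{N-1},
   evaluated at z := s(t^{(N-1)}).  If neither a nor a+1 lies in that lower part, only the
   z-factors see z_a, z_{a+1}, and they are symmetric in them.  If exactly one does, a single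
   factor changes and the relation is an identity of functions linear in 1/t.  If both do,
   they are adjacent there, at positions p and p+1, and the induction hypothesis at p
   combines with the reindexing s |-> (p p+1) s of the sum.  The case k > l is the case
   k < l for s_{a,a+1}(I), solved for W_{s_{a,a+1}(I)}: the 2x2 system has determinant -h. *)

From HB Require Import structures.
From mathcomp Require Import all_boot all_order all_algebra all_fingroup.
From mathcomp Require Import zify ring.
From Stdlib Require Import FunctionalExtensionality.
Import GRing.Theory.

Set Implicit Arguments.
Unset Strict Implicit.
Unset Printing Implicit Defensive.

Lemma swapn_l a : swapn a a = a.+1.
Proof. by rewrite /swapn eqxx. Qed.

Lemma swapn_r a : swapn a a.+1 = a.
Proof. by rewrite /swapn eqxx (gtn_eqF (ltnSn a)). Qed.

Lemma swapn_id a i : i != a -> i != a.+1 -> swapn a i = i.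
Proof. by rewrite /swapn => /negPf -> /negPf ->. Qed.

Lemma swapnK a : involutive (swapn a).
Proof.
move=> i; case: (eqVneq i a) => [->|ia]; first by rewrite swapn_l swapn_r.
case: (eqVneq i a.+1) => [->|ia1]; first by rewrite swapn_r swapn_l.
by rewrite !swapn_id.
Qed.

Lemma szK (T : Type) a : involutive (@sz T a).
Proof. by move=> z; apply: functional_extensionality => i; rewrite /sz swapnK. Qed.

Lemma sz_l (T : Type) a (z : nat -> T) : sz a z a = z a.+1.
Proof. by rewrite /sz swapn_l. Qed.

Lemma sz_r (T : Type) a (z : nat -> T) : sz a z a.+1 = z a.
Proof. by rewrite /sz swapn_r. Qed.

Lemma sIK a : involutive (sI a).
Proof. by move=> f; apply: functional_extensionality => i; rewrite /sI swapnK. Qed.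

(** * Ordered partitions *)

Definition elts_upto (n : nat) (f : nat -> nat) (k : nat) : seq nat :=
  [seq i <- iota 1 n | f i <= k].

Definition lower_part (n : nat) (f : nat -> nat) (k : nat) : nat -> nat :=
  fun q => f (ielt n f k q).

Lemma ieltE n f k c : ielt n f k c = nth 0 (elts_upto n f k) c.-1.
Proof. by []. Qed.

Lemma elts_upto_sorted n f k : sorted ltn (elts_upto n f k).
Proof. exact/sorted_filter/iota_ltn_sorted/ltn_trans. Qed.

Lemma ielt_bounds n f k c : 1 <= c <= size (elts_upto n f k) ->
  1 <= ielt n f k c <= n /\ f (ielt n f k c) <= k.
Proof.
move=> Hc; have : ielt n f k c \in elts_upto n f k.
  by rewrite ieltE mem_nth //; case: c Hc => //= c; rewrite ltnS => /andP[].
by rewrite mem_filter mem_iota => /andP[-> ?]; split => //; lia.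
Qed.

Lemma iota_split_pair n a : 1 <= a < n ->
  iota 1 n = iota 1 a.-1 ++ [:: a; a.+1] ++ iota a.+2 (n - a.+1).
Proof.
move=> Ha; have -> : n = (a.-1 + (2 + (n - a.+1)))%N by lia.
rewrite !iotaD /=; congr (_ ++ _ :: _ :: iota _ _); lia.
Qed.

Section Partition.
Variables (N n : nat) (lam f : nat -> nat).
Hypothesis Hf : is_part N n lam f.

Lemma size_elts_upto k : k <= N -> size (elts_upto n f k) = lamP lam k.
Proof.
case: Hf => Hr Hc; rewrite size_filter; elim: k => [|k IH] kN.
  rewrite /lamP big_geq //; transitivity (count pred0 (iota 1 n)); last exact: count_pred0.
  apply: eq_in_count => i; rewrite mem_iota => Hi /=; have := Hr i; lia.
rewrite /lamP big_nat_recr //= -/(lamP lam k) -IH ?(ltnW kN) // -(Hc k.+1) ?kN //.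
rewrite -count_predUI [count (predI _ _) _](_ : _ = 0) ?addn0.
  by apply: eq_count => i /=; rewrite leq_eqVlt ltnS orbC.
transitivity (count pred0 (iota 1 n)); last exact: count_pred0.
apply: eq_count => i /=; lia.
Qed.

Lemma ielt_full c : 1 <= c <= n -> ielt n f N c = c.
Proof.
case: Hf => Hr _ Hc; rewrite ieltE (_ : elts_upto n f N = iota 1 n).
  by rewrite nth_iota; lia.
by apply/all_filterP/allP => i; rewrite mem_iota => Hi; have := Hr i; lia.
Qed.

Lemma is_part_sI a : 1 <= a < n -> is_part N n lam (sI a f).
Proof.
case: Hf => Hr Hc Ha; split.
  move=> i Hi; apply: Hr; case: (eqVneq i a) => [->|ia]; first by rewrite swapn_l; lia.
  case: (eqVneq i a.+1) => [->|ia1]; first by rewrite swapn_r; lia.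
  by rewrite swapn_id.
move=> k Hk; rewrite -(Hc k Hk).
rewrite (iota_split_pair Ha) !count_cat; congr (_ + (_ + _)).
- by apply: eq_in_count => i; rewrite mem_iota => Hi; rewrite /sI swapn_id //; lia.
- by rewrite /= /sI swapn_l swapn_r !addn0 addnC.
- by apply: eq_in_count => i; rewrite mem_iota => Hi; rewrite /sI swapn_id //; lia.
Qed.

End Partition.

Lemma eq_ielt n (f g : nat -> nat) :
  {in [pred i | 1 <= i <= n], f =1 g} -> ielt n f = ielt n g.
Proof.
move=> E; do 2 apply: functional_extensionality => ?.
rewrite !ieltE /elts_upto; congr nth; apply: eq_in_filter => i.
by rewrite mem_iota => Hi; rewrite E // inE; lia.
Qed.

Section LowerPart.
Variables (N n : nat) (lam f : nat -> nat).
Hypothesis Hf : is_part N.+1 n lam f.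
Local Notation m := (lamP lam N).
Local Notation jj := (ielt n f N).
Local Notation g := (lower_part n f N).

Lemma map_ielt_lower : map jj (iota 1 m) = elts_upto n f N.
Proof.
rewrite -[RHS](mkseq_nth 0) (size_elts_upto Hf) // /mkseq.
by rewrite -addn1 addnC iotaDl -map_comp; apply: eq_map => q /=; rewrite ieltE addnC addn1.
Qed.

Lemma ielt_lower_ltE x y : 1 <= x <= m -> 1 <= y <= m -> (jj x < jj y) = (x < y).
Proof.
have Hs := size_elts_upto Hf (leqnSn N).
have mono u v : 1 <= u <= m -> 1 <= v <= m -> u < v -> jj u < jj v.
  move=> Hu Hv uv; rewrite !ieltE.
  by apply: (sorted_ltn_nth ltn_trans 0 (elts_upto_sorted n f N)); rewrite ?inE ?Hs; lia.
move=> Hx Hy; case: (ltngtP x y) => [|yx|->]; [exact: mono| |exact: ltnn].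
by apply/negbTE; rewrite -leqNgt ltnW // mono.
Qed.

Lemma is_part_lower : is_part N m lam g.
Proof.
case: Hf => Hr Hc; split.
  move=> q Hq; have [/Hr] : 1 <= ielt n f N q <= n /\ f (ielt n f N q) <= N.
    by apply: ielt_bounds; rewrite (size_elts_upto Hf).
  rewrite /lower_part; lia.
move=> k Hk; rewrite -(Hc k) ?(ltnW Hk) //; last by lia.
rewrite -(count_map jj (fun i => f i == k)) map_ielt_lower count_filter.
by apply: eq_count => i /=; case: (eqVneq (f i) k) => [->|] //=; apply/idP; lia.
Qed.

Lemma elts_upto_lower k : k <= N -> elts_upto n f k = map jj (elts_upto m g k).
Proof.
move=> kN; transitivity [seq i <- elts_upto n f N | f i <= k].
  rewrite -filter_predI; apply: eq_filter => i /=.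
  by case: leqP => //= /leq_trans ->.
by rewrite -map_ielt_lower filter_map.
Qed.

Lemma ielt_lower k c : k <= N -> 1 <= c <= lamP lam k ->
  ielt n f k c = jj (ielt m g k c) /\ 1 <= ielt m g k c <= m.
Proof.
move=> kN Hc; have Hs := size_elts_upto is_part_lower kN.
split; last by case: (@ielt_bounds m g k c); rewrite ?Hs.
by rewrite [LHS]ieltE elts_upto_lower // (nth_map 0) //; lia.
Qed.

End LowerPart.

Lemma nth_cat_mid (T : Type) (x0 : T) (s1 mid s2 : seq T) q :
  size s1 <= q < size s1 + size mid ->
  nth x0 (s1 ++ mid ++ s2) q = nth x0 mid (q - size s1).
Proof.
move=> Hq; rewrite nth_cat ltnNge (proj1 (andP Hq)) /= nth_cat.
by have -> : q - size s1 < size mid by lia.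
Qed.

Lemma nth_cat_mid_out (T : Type) (x0 : T) (s1 mid mid' s2 : seq T) q :
  size mid' = size mid -> ~~ (size s1 <= q < size s1 + size mid) ->
  nth x0 (s1 ++ mid' ++ s2) q = nth x0 (s1 ++ mid ++ s2) q.
Proof.
move=> Hs Hq; rewrite !nth_cat Hs; case: ltnP => // H1.
by have -> : q - size s1 < size mid = false by lia.
Qed.

Lemma mem_nth_cat_mid_out (T : eqType) (x0 : T) (s1 mid s2 : seq T) q :
  q < size (s1 ++ mid ++ s2) -> ~~ (size s1 <= q < size s1 + size mid) ->
  nth x0 (s1 ++ mid ++ s2) q \in s1 ++ s2.
Proof.
rewrite !size_cat => Hsz Hq; rewrite mem_cat !nth_cat.
case: ltnP => [H1|H1]; first by rewrite mem_nth.
have -> : q - size s1 < size mid = false by lia.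
by rewrite mem_nth ?orbT //; lia.
Qed.

Section FilterPair.
Variables (n a : nat) (P : pred nat).

Definition filter_below := [seq i <- iota 1 a.-1 | P i].
Definition filter_above := [seq i <- iota a.+2 (n - a.+1) | P i].

Lemma mem_filter_out x : x \in filter_below ++ filter_above -> x != a /\ x != a.+1.
Proof. by rewrite mem_cat !mem_filter !mem_iota; lia. Qed.

Hypothesis Ha : 1 <= a < n.

Lemma filter_iota_pair :
  [seq i <- iota 1 n | P i] = filter_below ++ [seq i <- [:: a; a.+1] | P i] ++ filter_above.
Proof. by rewrite (iota_split_pair Ha) !filter_cat. Qed.

Lemma filter_iota_pair_swap :
  [seq i <- iota 1 n | P (swapn a i)] =
  filter_below ++ [seq i <- [:: a; a.+1] | P (swapn a i)] ++ filter_above.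
Proof.
rewrite (iota_split_pair Ha) !filter_cat; congr (_ ++ _ ++ _); apply: eq_in_filter => i.
  by rewrite mem_iota => Hi; rewrite swapn_id //; lia.
by rewrite mem_iota => Hi; rewrite swapn_id //; lia.
Qed.

End FilterPair.

Local Open Scope ring_scope.

(** * Symmetrization *)

Definition perm_vars (T : Type) (L : nat) (s : 'S_L) (u : nat -> T) : nat -> T :=
  fun c => if (0 < c)%N then
      (if insub c.-1 is Some i then u (val (s i)).+1 else u c) else u c.

Lemma permvar_at (T : Type) m L (s : 'S_L) (t : nat -> nat -> T) :
  permvar m s t m = perm_vars s (t m).
Proof. by apply: functional_extensionality => c; rewrite /permvar eqxx. Qed.

Lemma permvar_off (T : Type) m L (s : 'S_L) (t : nat -> nat -> T) j :
  j != m -> permvar m s t j = t j.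
Proof. by move=> /negPf jm; apply: functional_extensionality => c; rewrite /permvar jm. Qed.

Lemma perm_varsE (T : Type) L (s : 'S_L) (u : nat -> T) c (Hc : (c.-1 < L)%N) :
  (0 < c)%N -> perm_vars s u c = u (val (s (Ordinal Hc))).+1.
Proof. by move=> c0; rewrite /perm_vars c0 insubT. Qed.

Lemma perm_vars_out (T : Type) L (s : 'S_L) (u : nat -> T) c :
  ~~ (1 <= c <= L)%N -> perm_vars s u c = u c.
Proof. by rewrite /perm_vars; case: c => [|c] //= Hc; rewrite insubF //; lia. Qed.

Lemma sz_perm_vars (T : Type) m p (s : 'S_m) (u : nat -> T)
    (Hp1 : (p.-1 < m)%N) (Hp2 : (p < m)%N) : (0 < p)%N ->
  sz p (perm_vars s u) = perm_vars (tperm (Ordinal Hp1) (Ordinal Hp2) * s)%g u.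
Proof.
move=> p0; apply: functional_extensionality => c; rewrite /sz.
case: (boolP (1 <= c <= m)%N) => Hc; last first.
  by rewrite swapn_id ?perm_vars_out //; apply/eqP => E; move: Hc; rewrite E; lia.
have Hc1 : (c.-1 < m)%N by lia.
have Hs1 : ((swapn p c).-1 < m)%N by rewrite /swapn; case: eqP; [|case: eqP]; lia.
rewrite (perm_varsE _ _ Hs1); last by rewrite /swapn; case: eqP; [|case: eqP]; lia.
rewrite (perm_varsE _ _ Hc1) ?permM; last by lia.
congr (u (val (s _)).+1); apply: val_inj => /=.
case: (eqVneq c p) => [E|cp].
  have -> : Ordinal Hc1 = Ordinal Hp1 by apply: val_inj; rewrite /= E.
  by rewrite tpermL /= E swapn_l.
case: (eqVneq c p.+1) => [E|cp1].
  have -> : Ordinal Hc1 = Ordinal Hp2 by apply: val_inj; rewrite /= E.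
  by rewrite tpermR /= E swapn_r.
by rewrite tpermD /= ?swapn_id //; apply/eqP => /(congr1 val) /=; lia.
Qed.

Lemma sum_perm_vars_sz (T : Type) (R : nmodType) m p (u : nat -> T) (G : (nat -> T) -> R) :
  (1 <= p < m)%N ->
  \sum_(s : 'S_m) G (sz p (perm_vars s u)) = \sum_(s : 'S_m) G (perm_vars s u).
Proof.
case/andP => p0 pm; have Hp1 : (p.-1 < m)%N by lia.
under eq_bigr => s _ do rewrite (sz_perm_vars s u Hp1 pm p0).
by rewrite [RHS](reindex_inj (mulgI (tperm (Ordinal Hp1) (Ordinal pm)))).
Qed.

Section SymUpto.
Variables (K : fieldType) (lam : nat -> nat).

Lemma SymUpto_loc m j (F G : (nat -> nat -> K) -> K) t :
  (m < j)%N -> (forall u, u j = t j -> F u = G u) ->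
  SymUpto lam m F t = SymUpto lam m G t.
Proof.
elim: m F G => [|m IH] F G mj FG /=; first exact: FG.
apply: IH => [|u uj]; first exact: ltnW.
by apply: eq_bigr => s _; apply: FG; rewrite permvar_off // gtn_eqF.
Qed.

Lemma eq_SymUpto m (F G : (nat -> nat -> K) -> K) t :
  F =1 G -> SymUpto lam m F t = SymUpto lam m G t.
Proof. by move=> FG; apply: (@SymUpto_loc m m.+1) => // u _; apply: FG. Qed.

Lemma SymUpto_sum m (I : finType) (G : I -> (nat -> nat -> K) -> K) t :
  SymUpto lam m (fun u => \sum_(i : I) G i u) t = \sum_(i : I) SymUpto lam m (G i) t.
Proof.
elim: m G t => [|m IH] G t //=.
by rewrite -IH; apply: eq_SymUpto => u; exact: exchange_big.
Qed.

Lemma SymUpto_scale m (c : K) (G : (nat -> nat -> K) -> K) t :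
  SymUpto lam m (fun u => c * G u) t = c * SymUpto lam m G t.
Proof.
elim: m G t => [|m IH] G t //=.
by rewrite -IH; apply: eq_SymUpto => u; rewrite mulr_sumr.
Qed.

End SymUpto.

(** * Peeling off the top level *)

Section Peel.
Variables (K : fieldType) (h : K).

Definition hratio (x y : K) : K := (1 - h * x / y) / (1 - x / y).

Definition zfactor (n j : nat) (u : K) (z : nat -> K) : K :=
  \prod_(1 <= c < n.+1)
     (if (c < j)%N then 1 - h * z c / u else if (j < c)%N then 1 - z c / u else 1).

(* The factors of U_I with k = N - 1, where t^{(N)} = z: the variables u_q = t^{(N-1)}_q
   sit at the positions jj q = i^{(N-1)}_q. *)
Definition top_level (m n : nat) (jj : nat -> nat) (u z : nat -> K) : K :=
  \prod_(1 <= q < m.+1) (zfactor n (jj q) (u q) z *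
     \prod_(q.+1 <= b < m.+1) hratio (u b) (u q)).

Lemma tvar_lt N (t : nat -> nat -> K) z k : (k < N)%N -> tvar N t z k = t k.
Proof. by move=> kN; rewrite /tvar ltn_eqF. Qed.

Lemma tvar_le N (t : nat -> nat -> K) k : (k <= N)%N -> tvar N t (t N) k = t k.
Proof. by move=> kN; rewrite /tvar; case: eqP => [->|]. Qed.

Lemma tvar_top N (t : nat -> nat -> K) z : tvar N t z N = z.
Proof. by rewrite /tvar eqxx. Qed.

Lemma eq_Ufun_lower N n lam f (u v : nat -> nat -> K) z :
  (forall k, (k < N)%N -> u k = v k) -> Ufun N n lam f h u z = Ufun N n lam f h v z.
Proof.
move=> uv; have E j : (j <= N)%N -> tvar N u z j = tvar N v z j.
  by rewrite /tvar; case: eqP => // /eqP jN lejN; apply: uv; rewrite ltn_neqAle jN.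
by apply: eq_big_nat => k Hk; rewrite (E k) ?(E k.+1) //; lia.
Qed.

Lemma Ufun_peel N n lam f (u : nat -> nat -> K) z :
  (0 < N)%N -> is_part N.+1 n lam f -> lamP lam N.+1 = n ->
  Ufun N.+1 n lam f h u z =
  Ufun N (lamP lam N) lam (lower_part n f N) h u (u N) *
  top_level (lamP lam N) n (ielt n f N) (u N) z.
Proof.
move=> N0 Hf Hn; rewrite /Ufun big_nat_recr //=; congr (_ * _).
  apply: eq_big_nat => k Hk; rewrite !(tvar_lt (N := N.+1)) ?tvar_le; try lia.
  apply: eq_big_nat => a Ha; congr (_ * _); apply: eq_big_nat => c Hc.
  have [-> Ra] := ielt_lower Hf (k := k) (c := a) (ltnW (proj2 (andP Hk))) Ha.
  have [-> Rc] := ielt_lower Hf (k := k.+1) (c := c) (proj2 (andP Hk)) Hc.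
  by rewrite !(ielt_lower_ltE Hf).
rewrite /top_level tvar_top tvar_lt // Hn; apply: eq_big_nat => a Ha.
by congr (_ * _); apply: eq_big_nat => c Hc; rewrite (ielt_full Hf); last lia.
Qed.

Lemma W_peel N n lam f (t : nat -> nat -> K) z :
  (0 < N)%N -> is_part N.+1 n lam f -> lamP lam N.+1 = n ->
  W N.+1 n lam f h t z = (1 - h) ^+ lamP lam N *
    \sum_(s : 'S_(lamP lam N))
      (top_level (lamP lam N) n (ielt n f N) (perm_vars s (t N)) z *
       W N (lamP lam N) lam (lower_part n f N) h t (perm_vars s (t N))).
Proof.
case: N => [//|N] _ Hf Hn.
have core : SymUpto lam N (fun u => \sum_(s : 'S_(lamP lam N.+1))
      Ufun N.+2 n lam f h (permvar N.+1 s u) z) t =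
    \sum_(s : 'S_(lamP lam N.+1))
      (top_level (lamP lam N.+1) n (ielt n f N.+1) (perm_vars s (t N.+1)) z *
       SymUpto lam N (fun u => Ufun N.+1 (lamP lam N.+1) lam (lower_part n f N.+1) h u
         (perm_vars s (t N.+1))) t).
  under [RHS]eq_bigr => s _ do rewrite -SymUpto_scale.
  rewrite -SymUpto_sum; apply: (@SymUpto_loc _ _ N N.+1) => // u uN.
  apply: eq_bigr => s _; rewrite Ufun_peel // permvar_at uN mulrC.
  by congr (_ * _); apply: eq_Ufun_lower => k kN; rewrite permvar_off //; lia.
rewrite /W.
have -> : lamB N.+2 lam = (lamB N.+1 lam + lamP lam N.+1)%N by rewrite /lamB big_nat_recr.
by rewrite exprD /= core !mulr_sumr; apply: eq_bigr => s _; ring.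
Qed.

End Peel.

(** * The factors involving z_a and z_(a+1) *)

Lemma prod_nat_split1 (K : comPzRingType) lo p m (F : nat -> K) : (lo <= p <= m)%N ->
  \prod_(lo <= c < m.+1) F c =
  \prod_(lo <= c < p) F c * F p * \prod_(p.+1 <= c < m.+1) F c.
Proof.
move=> Hp; rewrite (big_cat_nat _ (n := p)) /=; try lia.
by rewrite (big_ltn (m := p)) ?mulrA //; lia.
Qed.

Lemma prod_nat_split2 (K : comPzRingType) lo p m (F : nat -> K) : (lo <= p < m)%N ->
  \prod_(lo <= c < m.+1) F c =
  \prod_(lo <= c < p) F c * (F p * F p.+1) * \prod_(p.+2 <= c < m.+1) F c.
Proof.
move=> Hp; rewrite (prod_nat_split1 _ (p := p)); last by lia.
by rewrite (big_ltn (m := p.+1)) ?mulrA //; lia.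
Qed.

Section ZFactor.
Variables (K : fieldType) (h : K) (n a : nat).
Hypothesis Ha : (1 <= a < n)%N.

Definition zfactor_out (u : K) (z : nat -> K) : K :=
  \prod_(1 <= c < a) (1 - h * z c / u) * \prod_(a.+2 <= c < n.+1) (1 - z c / u).

Lemma zfactor_at u z : zfactor h n a u z = zfactor_out u z * (1 - z a.+1 / u).
Proof.
rewrite /zfactor (prod_nat_split2 _ (p := a)) //.
rewrite (@eq_big_nat _ _ _ 1 a _ (fun c => 1 - h * z c / u)) => [|c Hc]; last first.
  by have -> : (c < a)%N by lia.
rewrite (@eq_big_nat _ _ _ a.+2 n.+1 _ (fun c => 1 - z c / u)) => [|c Hc]; last first.
  have ca : (c < a)%N = false by lia.
  have ac : (a < c)%N by lia.
  by rewrite ca ac.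
by rewrite ltnn ltnSn (ltnNge a.+1) leqnSn mul1r mulrAC.
Qed.

Lemma zfactor_atS u z : zfactor h n a.+1 u z = zfactor_out u z * (1 - h * z a / u).
Proof.
rewrite /zfactor (prod_nat_split2 _ (p := a)) //.
rewrite (@eq_big_nat _ _ _ 1 a _ (fun c => 1 - h * z c / u)) => [|c Hc]; last first.
  by have -> : (c < a.+1)%N by lia.
rewrite (@eq_big_nat _ _ _ a.+2 n.+1 _ (fun c => 1 - z c / u)) => [|c Hc]; last first.
  have ca : (c < a.+1)%N = false by lia.
  have ac : (a.+1 < c)%N by lia.
  by rewrite ca ac.
by rewrite ltnn ltnSn mulr1 mulrAC.
Qed.

Lemma zfactor_out_sz u z : zfactor_out u (sz a z) = zfactor_out u z.
Proof.
by rewrite /zfactor_out /sz; congr (_ * _); apply: eq_big_nat => c Hc; rewrite swapn_id //; lia.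
Qed.

Lemma zfactor_sz j u z : j != a -> j != a.+1 -> zfactor h n j u (sz a z) = zfactor h n j u z.
Proof.
move=> ja ja1; rewrite /zfactor (prod_nat_split2 _ (p := a)) // [RHS](prod_nat_split2 _ (p := a)) //.
have Eout c : (1 <= c < a)%N || (a.+2 <= c < n.+1)%N -> sz a z c = z c.
  by move=> Hc; rewrite /sz swapn_id //; lia.
congr (_ * _ * _); try by apply: eq_big_nat => c Hc; rewrite Eout //; lia.
rewrite /sz swapn_l swapn_r mulrC.
case: (ltnP j a) => ja'.
  have -> : (a < j)%N = false by lia.
  have -> : (a.+1 < j)%N = false by lia.
  by have -> : (j < a.+1)%N by lia.
have -> : (a < j)%N by lia.
by have -> : (a.+1 < j)%N by lia.
Qed.

End ZFactor.

Section TopLevel.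
Variables (K : fieldType) (h : K) (n a m : nat).
Hypothesis Ha : (1 <= a < n)%N.

Definition top_term (jj : nat -> nat) (u z : nat -> K) (q : nat) : K :=
  zfactor h n (jj q) (u q) z * \prod_(q.+1 <= b < m.+1) hratio h (u b) (u q).

Lemma top_levelE jj u z : top_level h m n jj u z = \prod_(1 <= q < m.+1) top_term jj u z q.
Proof. by []. Qed.

Lemma top_level_single jj jj' p u z : (1 <= p <= m)%N ->
  (forall q, (1 <= q <= m)%N -> q != p -> jj' q = jj q /\ jj q != a /\ jj q != a.+1) ->
  exists X, [/\ top_level h m n jj u z = X * zfactor h n (jj p) (u p) z,
      top_level h m n jj' u z = X * zfactor h n (jj' p) (u p) z &
      top_level h m n jj u (sz a z) = X * zfactor h n (jj p) (u p) (sz a z)].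
Proof.
move=> Hp Hjj.
have Eout q : (1 <= q < p)%N || (p.+1 <= q < m.+1)%N ->
    top_term jj' u z q = top_term jj u z q /\ top_term jj u (sz a z) q = top_term jj u z q.
  move=> Hq; have [E [ja ja1]] : jj' q = jj q /\ jj q != a /\ jj q != a.+1.
    by apply: Hjj; lia.
  by rewrite /top_term E zfactor_sz.
have split_p jj0 z0 : top_level h m n jj0 u z0 = \prod_(1 <= q < p) top_term jj0 u z0 q *
    top_term jj0 u z0 p * \prod_(p.+1 <= q < m.+1) top_term jj0 u z0 q.
  by rewrite top_levelE (prod_nat_split1 _ (p := p)).
exists (\prod_(1 <= q < p) top_term jj u z q * \prod_(p.+1 <= b < m.+1) hratio h (u b) (u p) *
        \prod_(p.+1 <= q < m.+1) top_term jj u z q).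
rewrite !split_p /top_term; split; first by ring.
- rewrite (@eq_big_nat _ _ _ 1 p (top_term jj' u z) (top_term jj u z)) => [|q Hq]; last first.
    by case: (Eout q); first lia.
  rewrite (@eq_big_nat _ _ _ p.+1 m.+1 (top_term jj' u z) (top_term jj u z)) => [|q Hq].
    by rewrite /top_term; ring.
  by case: (Eout q); first lia.
- rewrite (@eq_big_nat _ _ _ 1 p (top_term jj u (sz a z)) (top_term jj u z)) => [|q Hq]; last first.
    by case: (Eout q); first lia.
  rewrite (@eq_big_nat _ _ _ p.+1 m.+1 (top_term jj u (sz a z)) (top_term jj u z)) => [|q Hq].
    by rewrite /top_term; ring.
  by case: (Eout q); first lia.
Qed.

(* The part of the factors of x = u_p and y = u_(p+1) that involves z_a and z_(a+1),
   together with their mutual factor. *)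
Definition pair_factor (x y za zb : K) : K :=
  hratio h y x * ((1 - zb / x) * (1 - h * za / y)).

Section Pair.
Variables (jj : nat -> nat) (p : nat).
Hypothesis Hp : (1 <= p < m)%N.
Hypothesis Hjp : jj p = a.
Hypothesis HjpS : jj p.+1 = a.+1.
Hypothesis Hjo : forall q, (1 <= q <= m)%N -> q != p -> q != p.+1 -> jj q != a /\ jj q != a.+1.

Definition pair_tail (u : nat -> K) : K :=
  \prod_(p.+2 <= b < m.+1) (hratio h (u b) (u p) * hratio h (u b) (u p.+1)).

Lemma top_term_pair u z : top_term jj u z p * top_term jj u z p.+1 =
  zfactor_out h n a (u p) z * zfactor_out h n a (u p.+1) z * pair_tail u *
  pair_factor (u p) (u p.+1) (z a) (z a.+1).
Proof.
rewrite /top_term Hjp HjpS zfactor_at // zfactor_atS // (big_ltn (m := p.+1)); last by lia.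
rewrite /pair_tail (big_split _ _ _ (fun b => hratio h (u b) (u p)) (fun b => hratio h (u b) (u p.+1))).
by rewrite /pair_factor /=; ring.
Qed.

Lemma top_term_sz_vars q u z : (1 <= q <= m)%N -> q != p -> q != p.+1 ->
  top_term jj (sz p u) z q = top_term jj u z q.
Proof.
move=> Hq qp qp1; rewrite /top_term /sz (swapn_id qp qp1); congr (_ * _).
case: (ltnP q p) => qlt; last by apply: eq_big_nat => b Hb; rewrite swapn_id //; lia.
rewrite (prod_nat_split2 _ (p := p)) 1?[RHS](prod_nat_split2 _ (p := p)); try lia.
rewrite swapn_l swapn_r (mulrC (hratio h (u p.+1) _)).
by congr (_ * _ * _); apply: eq_big_nat => b Hb; rewrite swapn_id //; lia.
Qed.

Lemma top_term_sz q u z : (1 <= q <= m)%N -> q != p -> q != p.+1 ->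
  top_term jj u (sz a z) q = top_term jj u z q.
Proof. by move=> Hq qp qp1; have [ja ja1] := Hjo Hq qp qp1; rewrite /top_term zfactor_sz. Qed.

Lemma pair_tail_sz u : pair_tail (sz p u) = pair_tail u.
Proof.
rewrite /pair_tail {2 4}/sz swapn_l swapn_r; apply: eq_big_nat => b Hb.
by rewrite /sz swapn_id; [exact: mulrC | lia | lia].
Qed.

Lemma top_level_pair u z : exists S,
  [/\ top_level h m n jj u z = S * pair_factor (u p) (u p.+1) (z a) (z a.+1),
      top_level h m n jj (sz p u) z = S * pair_factor (u p.+1) (u p) (z a) (z a.+1),
      top_level h m n jj u (sz a z) = S * pair_factor (u p) (u p.+1) (z a.+1) (z a) &
      top_level h m n jj (sz p u) (sz a z) = S * pair_factor (u p.+1) (u p) (z a.+1) (z a)].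
Proof.
have split_p u' z' : (u' = u \/ u' = sz p u) -> (z' = z \/ z' = sz a z) ->
    top_level h m n jj u' z' = \prod_(1 <= q < p) top_term jj u z q *
      (top_term jj u' z' p * top_term jj u' z' p.+1) * \prod_(p.+2 <= q < m.+1) top_term jj u z q.
  move=> Hu Hz; rewrite top_levelE (prod_nat_split2 _ (p := p)); last by lia.
  have Eout q : (1 <= q <= m)%N -> q != p -> q != p.+1 -> top_term jj u' z' q = top_term jj u z q.
    by move=> Hq qp qp1; case: Hu => ->; case: Hz => ->; rewrite ?top_term_sz_vars ?top_term_sz.
  by congr (_ * _ * _); apply: eq_big_nat => q Hq; apply: Eout; lia.
exists (\prod_(1 <= q < p) top_term jj u z q * \prod_(p.+2 <= q < m.+1) top_term jj u z q *
   (zfactor_out h n a (u p) z * zfactor_out h n a (u p.+1) z * pair_tail u)).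
rewrite !split_p; try by [left | right].
rewrite !top_term_pair pair_tail_sz !zfactor_out_sz // /sz !swapn_l !swapn_r.
by split; ring.
Qed.

End Pair.
End TopLevel.

(** * The exchange relations *)

Definition hdefect (K : fieldType) (h x y : K) : K := (h - 1) * (x / y) / (1 - x / y).

Section Identities.
Variables (K : fieldType) (h : K).

Lemma exchange_linear (u x y : K) : u != 0 -> y != 0 -> x != y ->
  1 - h * x / u = hratio h x y * (1 - x / u) + hdefect h x y * (1 - y / u).
Proof.
move=> u0 y0 xy; have yx : y - x != 0 by rewrite subr_eq0 eq_sym.
by rewrite /hratio /hdefect; field; rewrite u0 y0 yx.
Qed.

Lemma pair_factor_exchange (x y za zb : K) : x != 0 -> y != 0 -> x != y ->
  zb != 0 -> za != zb ->
  pair_factor h y x za zb * hratio h y x + pair_factor h x y za zb * hdefect h x y =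
  hratio h za zb * pair_factor h x y zb za + hdefect h za zb * pair_factor h x y za zb.
Proof.
move=> x0 y0 xy zb0 zab; have xy' : x - y != 0 by rewrite subr_eq0.
have yx : y - x != 0 by rewrite subr_eq0 eq_sym.
have zba : zb - za != 0 by rewrite subr_eq0 eq_sym.
by rewrite /pair_factor /hratio /hdefect; field; rewrite x0 y0 xy' yx zb0 zba.
Qed.

Lemma pair_factor_antisym (x y za zb : K) : x != 0 -> y != 0 -> x != y ->
  pair_factor h y x zb za - pair_factor h y x za zb =
  - (pair_factor h x y zb za - pair_factor h x y za zb).
Proof.
move=> x0 y0 xy; have xy' : x - y != 0 by rewrite subr_eq0.
have yx : y - x != 0 by rewrite subr_eq0 eq_sym.
by rewrite /pair_factor /hratio; field; rewrite x0 y0 xy' yx.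
Qed.

Lemma exchange_inverse (x y w ws : K) : h != 0 -> x != 0 -> y != 0 -> x != y ->
  hratio h^-1 y x * (hratio h y x * w + hdefect h y x * ws) +
  hdefect h^-1 y x * (hratio h x y * ws + hdefect h x y * w) = w.
Proof.
move=> h0 x0 y0 xy; have xy' : x - y != 0 by rewrite subr_eq0.
have yx : y - x != 0 by rewrite subr_eq0 eq_sym.
by rewrite /hratio /hdefect; field; rewrite h0 x0 y0 xy' yx.
Qed.

End Identities.

Lemma sum_perm_vars_antisym (K : fieldType) m p (u : nat -> K) (D F : (nat -> K) -> K) :
  (1 <= p < m)%N ->
  (forall s : 'S_m, perm_vars s u p != perm_vars s u p.+1) ->
  (forall s : 'S_m, D (sz p (perm_vars s u)) = - D (perm_vars s u)) ->
  (forall s : 'S_m, F (sz p (perm_vars s u)) = F (perm_vars s u)) ->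
  \sum_(s : 'S_m) D (perm_vars s u) * F (perm_vars s u) = 0.
Proof.
move=> Hp Hne HD HF.
(* No division by 2: the weight [x / (x - y)] splits [D] into [E(x,y) - E(y,x)]
   in every characteristic. *)
pose E V := D V * (V p / (V p - V p.+1)).
transitivity (\sum_(s : 'S_m) (E (perm_vars s u) * F (perm_vars s u) -
                              E (sz p (perm_vars s u)) * F (sz p (perm_vars s u)))).
  apply: eq_bigr => s _; rewrite /E HD HF sz_l sz_r.
  have xy : perm_vars s u p - perm_vars s u p.+1 != 0 by rewrite subr_eq0.
  have yx : perm_vars s u p.+1 - perm_vars s u p != 0 by rewrite subr_eq0 eq_sym.
  by field; rewrite xy yx.
by rewrite sumrB (sum_perm_vars_sz _ (fun V => E V * F V) Hp) subrr.
Qed.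

Lemma eq_W (K : fieldType) N n lam (f g : nat -> nat) (h : K) t z :
  {in [pred i | 1 <= i <= n]%N, f =1 g} -> W N n lam f h t z = W N n lam g h t z.
Proof. by move=> E; rewrite /W /Ufun (eq_ielt E). Qed.

Lemma W1 (K : fieldType) n lam f (h : K) t z : W 1 n lam f h t z = 1.
Proof. by rewrite /W /lamB big_geq // expr0 mul1r /= /Ufun big_geq. Qed.

Definition generic_vars (K : fieldType) (lam : nat -> nat) (t : nat -> nat -> K) (N : nat) :=
  (forall k c, (1 <= k < N)%N -> (1 <= c <= lamP lam k)%N -> t k c != 0) /\
  (forall k c d, (1 <= k < N)%N -> (1 <= c <= lamP lam k)%N ->
     (1 <= d <= lamP lam k)%N -> c != d -> t k c != t k d).

Section Step.
Variables (K : fieldType) (h : K) (lam : nat -> nat) (t : nat -> nat -> K).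
Variables (N n : nat) (f : nat -> nat) (a : nat).
Hypothesis N_gt0 : (0 < N)%N.
Hypothesis Hn : lamP lam N.+1 = n.
Hypothesis Hf : is_part N.+1 n lam f.
Hypothesis Ha : (1 <= a < n)%N.
Hypothesis Ht : generic_vars lam t N.+1.

Local Notation m := (lamP lam N).
Local Notation jj := (ielt n f N).
Local Notation g := (lower_part n f N).
Local Notation T := (t N).
Local Notation Wl := (W N m lam g h t).

Lemma perm_vars_neq0 (s : 'S_m) c : (1 <= c <= m)%N -> perm_vars s T c != 0.
Proof.
move=> Hc; have Hc1 : (c.-1 < m)%N by lia.
rewrite (perm_varsE _ _ Hc1); last by lia.
have : (val (s (Ordinal Hc1)) < m)%N := ltn_ord _.
by case: Ht => Ht0 _ Hs; apply: Ht0; lia.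
Qed.

Lemma perm_vars_adj (s : 'S_m) p : (1 <= p < m)%N -> perm_vars s T p != perm_vars s T p.+1.
Proof.
move=> Hp; have Hp1 : (p.-1 < m)%N by lia.
have Hp2 : (p.+1.-1 < m)%N by lia.
rewrite (perm_varsE _ _ Hp1) ?(perm_varsE _ _ Hp2) //; last by lia.
have : (val (s (Ordinal Hp1)) < m)%N := ltn_ord _.
have : (val (s (Ordinal Hp2)) < m)%N := ltn_ord _.
case: Ht => _ Htd Hs2 Hs1; apply: Htd; try lia.
by apply/negP => /eqP [] /val_inj /perm_inj [] /=; lia.
Qed.

Lemma lower_ielt_le q : (1 <= q <= m)%N -> (f (jj q) <= N)%N.
Proof. by move=> Hq; case: (@ielt_bounds n f N q); rewrite ?(size_elts_upto Hf). Qed.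

Lemma W_sz_top z : ~~ (f a <= N)%N -> ~~ (f a.+1 <= N)%N ->
  W N.+1 n lam f h t (sz a z) = W N.+1 n lam f h t z.
Proof.
move=> Ha_top HaS_top; rewrite !W_peel //; congr (_ * _); apply: eq_bigr => s _.
congr (_ * _); apply: eq_big_nat => q Hq; rewrite zfactor_sz //.
  by apply: contraNneq Ha_top => <-; apply: lower_ielt_le; lia.
by apply: contraNneq HaS_top => <-; apply: lower_ielt_le; lia.
Qed.

Section BothLower.
Hypotheses (Ha_low : (f a <= N)%N) (HaS_low : (f a.+1 <= N)%N).
Local Notation below := (filter_below a (fun i => f i <= N)%N).
Local Notation above := (filter_above n a (fun i => f i <= N)%N).
Local Notation p := (size below).+1.

Lemma elts_upto_pair : elts_upto n f N = below ++ [:: a; a.+1] ++ above.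
Proof. by rewrite /elts_upto (filter_iota_pair _ Ha) /= Ha_low HaS_low. Qed.

Lemma pair_pos : (1 <= p < m)%N.
Proof. by rewrite -(size_elts_upto Hf) // elts_upto_pair !size_cat /=; lia. Qed.

Lemma ielt_pair : jj p = a /\ jj p.+1 = a.+1.
Proof. by rewrite !ieltE elts_upto_pair !nth_cat_mid /= ?subnn ?subSnn //; lia. Qed.

Lemma ielt_pair_out q : (1 <= q <= m)%N -> q != p -> q != p.+1 -> jj q != a /\ jj q != a.+1.
Proof.
move=> Hq qp qp1; suff : jj q \in below ++ above by exact: mem_filter_out.
rewrite ieltE elts_upto_pair.
apply: mem_nth_cat_mid_out; last by rewrite /=; lia.
by rewrite -elts_upto_pair (size_elts_upto Hf) //; lia.
Qed.

Lemma ielt_sI_pair : ielt n (sI a f) N = jj.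
Proof.
apply: functional_extensionality => c; rewrite !ieltE elts_upto_pair /elts_upto /sI.
by rewrite (filter_iota_pair_swap (fun i => f i <= N)%N Ha) /= swapn_l swapn_r HaS_low Ha_low.
Qed.

Lemma lower_part_sI_pair : {in [pred q | 1 <= q <= m]%N, lower_part n (sI a f) N =1 sI p g}.
Proof.
move=> q; rewrite inE => Hq; rewrite /lower_part ielt_sI_pair /sI.
have [E1 E2] := ielt_pair.
case: (eqVneq q p) => [->|qp]; first by rewrite E1 !swapn_l E2.
case: (eqVneq q p.+1) => [->|qp1]; first by rewrite E2 !swapn_r E1.
by have [? ?] := ielt_pair_out Hq qp qp1; rewrite !swapn_id.
Qed.

Lemma W_sI_peel_pair z : W N.+1 n lam (sI a f) h t z = (1 - h) ^+ m *
  \sum_(s : 'S_m) (top_level h m n jj (perm_vars s T) z *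
                   W N m lam (sI p g) h t (perm_vars s T)).
Proof.
rewrite W_peel //; last exact: is_part_sI.
rewrite ielt_sI_pair; congr (_ * _); apply: eq_bigr => s _.
by congr (_ * _); apply: eq_W; exact: lower_part_sI_pair.
Qed.

Lemma W_sz_pair z :
  (forall g0 a0 u, is_part N m lam g0 -> (1 <= a0 < m)%N -> g0 a0 = g0 a0.+1 ->
     W N m lam g0 h t (sz a0 u) = W N m lam g0 h t u) ->
  f a = f a.+1 -> W N.+1 n lam f h t (sz a z) = W N.+1 n lam f h t z.
Proof.
move=> IH Hfa; have [Hjp HjpS] := ielt_pair.
rewrite !W_peel //; congr (_ * _); apply/eqP; rewrite -subr_eq0 -sumrB; apply/eqP.
pose D U := top_level h m n jj U (sz a z) - top_level h m n jj U z.
under eq_bigr do rewrite -mulrBl -/(D _).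
apply: sum_perm_vars_antisym pair_pos _ _ _ => s; first exact: perm_vars_adj pair_pos.
  have [S [E1 E2 E3 E4]] := top_level_pair h Ha pair_pos Hjp HjpS ielt_pair_out (perm_vars s T) z.
  rewrite /D E1 E2 E3 E4 -!(mulrBr S) pair_factor_antisym ?mulrN //.
  - by apply: perm_vars_neq0; have := pair_pos; lia.
  - by apply: perm_vars_neq0; have := pair_pos; lia.
  - exact: perm_vars_adj pair_pos.
by apply: IH; [exact: is_part_lower | exact: pair_pos | rewrite /lower_part Hjp HjpS].
Qed.

Lemma top_level_pair_exchange z (s : 'S_m) : z a.+1 != 0 -> z a != z a.+1 ->
  top_level h m n jj (sz p (perm_vars s T)) z * hratio h (perm_vars s T p.+1) (perm_vars s T p) +
  top_level h m n jj (perm_vars s T) z * hdefect h (perm_vars s T p) (perm_vars s T p.+1) =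
  hratio h (z a) (z a.+1) * top_level h m n jj (perm_vars s T) (sz a z) +
  hdefect h (z a) (z a.+1) * top_level h m n jj (perm_vars s T) z.
Proof.
move=> zS0 zaS; have [Hjp HjpS] := ielt_pair; have Hp := pair_pos.
have [S [E1 E2 E3 _]] := top_level_pair h Ha Hp Hjp HjpS ielt_pair_out (perm_vars s T) z.
have x0 : perm_vars s T p != 0 by apply: perm_vars_neq0; lia.
have y0 : perm_vars s T p.+1 != 0 by apply: perm_vars_neq0; lia.
have xy := perm_vars_adj s Hp.
set x := perm_vars s T p in x0 xy E1 E2 E3 *; set y := perm_vars s T p.+1 in y0 xy E1 E2 E3 *.
rewrite E1 E2 E3; transitivity (S * (pair_factor h y x (z a) (z a.+1) * hratio h y x +
  pair_factor h x y (z a) (z a.+1) * hdefect h x y)); first by ring.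
by rewrite pair_factor_exchange //; ring.
Qed.

Lemma W_exchange_pair z :
  (forall g0 a0 u, is_part N m lam g0 -> (1 <= a0 < m)%N ->
     (forall i, (1 <= i <= m)%N -> u i != 0) -> (g0 a0 < g0 a0.+1)%N -> u a0 != u a0.+1 ->
     W N m lam (sI a0 g0) h t u =
       hratio h (u a0) (u a0.+1) * W N m lam g0 h t (sz a0 u) +
       hdefect h (u a0) (u a0.+1) * W N m lam g0 h t u) ->
  (f a < f a.+1)%N -> z a.+1 != 0 -> z a != z a.+1 ->
  W N.+1 n lam (sI a f) h t z =
    hratio h (z a) (z a.+1) * W N.+1 n lam f h t (sz a z) +
    hdefect h (z a) (z a.+1) * W N.+1 n lam f h t z.
Proof.
move=> IH Hfa zS0 zaS; have [Hjp HjpS] := ielt_pair; have Hp := pair_pos.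
pose top U := top_level h m n jj U z.
have lower_exchange (s : 'S_m) : W N m lam (sI p g) h t (perm_vars s T) =
    hratio h (perm_vars s T p) (perm_vars s T p.+1) * Wl (sz p (perm_vars s T)) +
    hdefect h (perm_vars s T p) (perm_vars s T p.+1) * Wl (perm_vars s T).
  apply: IH => //; [exact: is_part_lower | exact: perm_vars_neq0 | | exact: perm_vars_adj].
  by rewrite /lower_part Hjp HjpS.
have reindexed : \sum_(s : 'S_m) top (perm_vars s T) *
      hratio h (perm_vars s T p) (perm_vars s T p.+1) * Wl (sz p (perm_vars s T)) =
    \sum_(s : 'S_m) top (sz p (perm_vars s T)) *
      hratio h (perm_vars s T p.+1) (perm_vars s T p) * Wl (perm_vars s T).
  rewrite -(@sum_perm_vars_sz _ _ m p T (fun V => top (sz p V) * hratio h (V p.+1) (V p) * Wl V)) //.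
  by apply: eq_bigr => s _; rewrite szK sz_l sz_r.
rewrite W_sI_peel_pair !W_peel //.
have -> : \sum_(s : 'S_m) top (perm_vars s T) * W N m lam (sI p g) h t (perm_vars s T) =
    \sum_(s : 'S_m) (hratio h (z a) (z a.+1) *
        (top_level h m n jj (perm_vars s T) (sz a z) * Wl (perm_vars s T)) +
      hdefect h (z a) (z a.+1) * (top (perm_vars s T) * Wl (perm_vars s T))).
  transitivity (\sum_(s : 'S_m) top (perm_vars s T) *
      hratio h (perm_vars s T p) (perm_vars s T p.+1) * Wl (sz p (perm_vars s T)) +
    \sum_(s : 'S_m) top (perm_vars s T) *
      hdefect h (perm_vars s T p) (perm_vars s T p.+1) * Wl (perm_vars s T)).
    by rewrite -big_split; apply: eq_bigr => s _ /=; rewrite lower_exchange; ring.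
  rewrite reindexed -big_split; apply: eq_bigr => s _ /=.
  by rewrite /top -mulrDl top_level_pair_exchange //; ring.
by rewrite big_split /= -!mulr_sumr; ring.
Qed.

End BothLower.

Section OneLower.
Hypotheses (Ha_low : (f a <= N)%N) (HaS_top : ~~ (f a.+1 <= N)%N).
Local Notation below := (filter_below a (fun i => f i <= N)%N).
Local Notation above := (filter_above n a (fun i => f i <= N)%N).
Local Notation p := (size below).+1.
Local Notation jj' := (ielt n (sI a f) N).

Lemma elts_upto_single : elts_upto n f N = below ++ [:: a] ++ above.
Proof. by rewrite /elts_upto (filter_iota_pair _ Ha) /= Ha_low (negbTE HaS_top). Qed.

Lemma elts_upto_sI_single : elts_upto n (sI a f) N = below ++ [:: a.+1] ++ above.
Proof.
rewrite /elts_upto /sI (filter_iota_pair_swap (fun i => f i <= N)%N Ha) /=.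
by rewrite swapn_l swapn_r Ha_low (negbTE HaS_top).
Qed.

Lemma single_pos : (1 <= p <= m)%N.
Proof. by rewrite -(size_elts_upto Hf) // elts_upto_single !size_cat /=; lia. Qed.

Lemma ielt_single : jj p = a /\ jj' p = a.+1.
Proof. by rewrite !ieltE elts_upto_single elts_upto_sI_single !nth_cat_mid /= ?subnn //; lia. Qed.

Lemma ielt_single_out q : (1 <= q <= m)%N -> q != p ->
  jj' q = jj q /\ jj q != a /\ jj q != a.+1.
Proof.
move=> Hq qp; have Hout : ~~ (size below <= q.-1 < size below + size [:: a])%N by rewrite /=; lia.
rewrite !ieltE elts_upto_sI_single elts_upto_single.
rewrite (@nth_cat_mid_out _ 0%N _ [:: a] [:: a.+1] _ _ erefl Hout).
split=> //; apply: (@mem_filter_out n a (fun i => f i <= N)%N).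
apply: mem_nth_cat_mid_out; last exact: Hout.
by rewrite -elts_upto_single (size_elts_upto Hf) //; lia.
Qed.

Lemma lower_part_sI_single : {in [pred q | 1 <= q <= m]%N, lower_part n (sI a f) N =1 g}.
Proof.
move=> q; rewrite inE => Hq; rewrite /lower_part /sI; have [E E'] := ielt_single.
case: (eqVneq q p) => [->|qp]; first by rewrite E' swapn_r E.
by have [-> [? ?]] := ielt_single_out Hq qp; rewrite swapn_id.
Qed.

Lemma W_exchange_single z : z a.+1 != 0 -> z a != z a.+1 ->
  W N.+1 n lam (sI a f) h t z =
    hratio h (z a) (z a.+1) * W N.+1 n lam f h t (sz a z) +
    hdefect h (z a) (z a.+1) * W N.+1 n lam f h t z.
Proof.
move=> zS0 zaS; have [Hjp Hjp'] := ielt_single.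
have pointwise (s : 'S_m) : top_level h m n jj' (perm_vars s T) z =
    hratio h (z a) (z a.+1) * top_level h m n jj (perm_vars s T) (sz a z) +
    hdefect h (z a) (z a.+1) * top_level h m n jj (perm_vars s T) z.
  have [X [E1 E2 E3]] := top_level_single h Ha (perm_vars s T) z single_pos ielt_single_out.
  have U0 : perm_vars s T p != 0 by apply: perm_vars_neq0; exact: single_pos.
  rewrite E1 E2 E3 Hjp Hjp' zfactor_atS // !zfactor_at // zfactor_out_sz // sz_r.
  by rewrite (exchange_linear h U0 zS0 zaS); ring.
have lower u : W N m lam (lower_part n (sI a f) N) h t u = Wl u.
  by apply: eq_W; exact: lower_part_sI_single.
rewrite W_peel //; last exact: is_part_sI.
rewrite !W_peel // (eq_bigr (fun s : 'S_m =>
    hratio h (z a) (z a.+1) * (top_level h m n jj (perm_vars s T) (sz a z) * Wl (perm_vars s T)) +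
    hdefect h (z a) (z a.+1) * (top_level h m n jj (perm_vars s T) z * Wl (perm_vars s T)))).
  by rewrite big_split /= -!mulr_sumr; ring.
by move=> s _; rewrite lower pointwise; ring.
Qed.

End OneLower.
End Step.

Lemma generic_vars_lower (K : fieldType) lam (t : nat -> nat -> K) N :
  generic_vars lam t N.+1 -> generic_vars lam t N.
Proof. by case=> Ht0 Htd; split=> [k c Hk|k c d Hk]; [apply: Ht0 | apply: Htd]; lia. Qed.

Lemma W_sz_same_block (K : fieldType) (h : K) lam t N n f a z :
  lamP lam N = n -> is_part N n lam f -> (1 <= a < n)%N -> generic_vars lam t N ->
  f a = f a.+1 -> W N n lam f h t (sz a z) = W N n lam f h t z.
Proof.
elim: N n f a z => [|N IH] n f a z Hn Hf Ha Ht Hfa.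
  by move: Hn Ha; rewrite /lamP big_geq //; lia.
case: (posnP N) => [->|N_gt0]; first by rewrite !W1.
case: (boolP (f a <= N)%N) => Ha_low.
  apply: W_sz_pair => //; first by rewrite -Hfa.
  by move=> g0 a0 u Hg0 Ha0; apply: IH => //; exact: generic_vars_lower.
by apply: W_sz_top; rewrite -?Hfa.
Qed.

Lemma W_exchange (K : fieldType) (h : K) lam t N n f a z :
  lamP lam N = n -> is_part N n lam f -> (1 <= a < n)%N -> generic_vars lam t N ->
  (forall i, (1 <= i <= n)%N -> z i != 0) -> (f a < f a.+1)%N -> z a != z a.+1 ->
  W N n lam (sI a f) h t z =
    hratio h (z a) (z a.+1) * W N n lam f h t (sz a z) +
    hdefect h (z a) (z a.+1) * W N n lam f h t z.
Proof.
elim: N n f a z => [|N IH] n f a z Hn Hf Ha Ht Hz Hfa zaS.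
  by move: Hn Ha; rewrite /lamP big_geq //; lia.
have [Hr _] := Hf; have := Hr a; have := Hr a.+1 => HaS_range Ha_range.
have zS0 : z a.+1 != 0 by apply: Hz; lia.
case: (posnP N) => [N0|N_gt0]; first by move: Hfa HaS_range Ha_range; rewrite N0; lia.
case: (boolP (f a.+1 <= N)%N) => HaS_low.
  apply: W_exchange_pair => //; first by lia.
  by move=> g0 a0 u Hg0 Ha0 Hu; apply: IH => //; exact: generic_vars_lower.
by apply: W_exchange_single => //; lia.
Qed.

Lemma swapn_range n a i : (1 <= a < n)%N -> (1 <= i <= n)%N -> (1 <= swapn a i <= n)%N.
Proof. by move=> Ha Hi; rewrite /swapn; case: eqP; [|case: eqP]; lia. Qed.

Theorem corollary6p11 (K : fieldType) (N n : nat) (lam : nat -> nat)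
  (f : nat -> nat) (a : nat) (h : K) (t : nat -> nat -> K) (z : nat -> K) :
  (\sum_(1 <= k < N.+1) lam k)%N = n ->
  is_part N n lam f ->
  (1 <= a < n)%N ->
  (forall k c, (1 <= k < N)%N -> (1 <= c <= lamP lam k)%N -> t k c != 0) ->
  (forall k c d, (1 <= k < N)%N -> (1 <= c <= lamP lam k)%N ->
     (1 <= d <= lamP lam k)%N -> c != d -> t k c != t k d) ->
  (forall i, (1 <= i <= n)%N -> z i != 0) ->
  [/\ f a = f a.+1 -> W N n lam f h t (sz a z) = W N n lam f h t z,
      (f a < f a.+1)%N -> z a != z a.+1 ->
        W N n lam (sI a f) h t z =
          (1 - h * z a / z a.+1) / (1 - z a / z a.+1) * W N n lam f h t (sz a z)
          + (h - 1) * (z a / z a.+1) / (1 - z a / z a.+1) * W N n lam f h t z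
    & (f a.+1 < f a)%N -> h != 0 -> z a != z a.+1 ->
        W N n lam (sI a f) h t z =
          (1 - h^-1 * z a.+1 / z a) / (1 - z a.+1 / z a) * W N n lam f h t (sz a z)
          + (h^-1 - 1) * (z a.+1 / z a) / (1 - z a.+1 / z a) * W N n lam f h t z].
Proof.
move=> Hn Hf Ha Ht0 Htd Hz; have Ht : generic_vars lam t N by [].
split; [exact: W_sz_same_block | exact: W_exchange |] => Hfa h0 zaS.
have Hg := is_part_sI Hf Ha; set g := sI a f in Hg *.
have Hsz i : (1 <= i <= n)%N -> sz a z i != 0 by move=> Hi; apply/Hz/swapn_range.
have := W_exchange h Hn Hg Ha Ht Hz; have := W_exchange h Hn Hg Ha Ht Hsz.
rewrite /g sIK szK sz_l sz_r /sI swapn_l swapn_r => Esz Ez.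
rewrite (Esz Hfa); last by rewrite eq_sym.
rewrite (Ez Hfa zaS); symmetry; apply: exchange_inverse => //; apply: Hz; lia.
Qed.
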